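(* Let $(X,\mu)$ be a measure space with $\mu$ not identically zero. For $i=1,\dots,n$ let $1<p_i<\infty$ with $\sum_{i=1}^n p_i^{-1}=1$, and let $0\le f_i\in L^{p_i}(\mu)$ with $\|f_i\|_{p_i}>0$. Let $p_{\min}^{-1}=\min\{p_1^{-1},\dots,p_n^{-1}\}$, $p_{\max}^{-1}=\max\{p_1^{-1},\dots,p_n^{-1}\}$, and $$R:=\frac{\int\prod_{i=1}^n f_i^{p_i/n}\,d\mu}{\prod_{i=1}^n\|f_i\|_{p_i}^{p_i/n}}.$$ Then $$\prod_{i=1}^n\|f_i\|_{p_i}\left(1-np^{-1}_{\max}(1-R)\right)\le\Big\|\prod_{i=1}^n f_i\Big\|_1\le\prod_{i=1}^n\|f_i\|_{p_i}\left(1-np^{-1}_{\min}(1-R)\right).$$ *)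

From HB Require Import structures.
From mathcomp Require Import all_boot all_order all_algebra.
From mathcomp Require Import all_classical all_reals all_analysis.
Set Implicit Arguments. Unset Strict Implicit. Unset Printing Implicit Defensive.
Import Order.TTheory GRing.Theory Num.Theory.
Import numFieldNormedType.Exports.

Local Open Scope ring_scope.

(* p_min^{-1} = min_i p_i^{-1}.  The neutral element 1 is harmless since every
   p_i^{-1} < 1 under the hypotheses (and n >= 1 is forced by sum p_i^{-1} = 1). *)
Definition pinv_min {R : realType} (n : nat) (p : 'I_n -> R) : R :=
  \big[Num.min/1]_(i < n) (p i)^-1.
(* p_max^{-1} = max_i p_i^{-1}; neutral element 0 is harmless since p_i^{-1} > 0. *)
Definition pinv_max {R : realType} (n : nat) (p : 'I_n -> R) : R :=
  \big[Num.max/0]_(i < n) (p i)^-1.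

From HB Require Import structures.
From mathcomp Require Import all_boot all_order all_algebra.
From mathcomp Require Import all_classical all_reals all_analysis.
From mathcomp Require Import measurable_realfun lra.

(* Normalise [a_i := (f_i / |f_i|_{p_i}) ^ p_i], so that [\int a_i = 1], the integral of
   [prod_i a_i ^ (1/p_i)] is [|prod_i f_i|_1 / prod_i |f_i|_{p_i}], and the integral of the
   geometric mean [G := prod_i a_i ^ (1/n)] is [R].  Pointwise, weighted AM-GM with the weights
   [1/p_i - 1/p_min] on the [a_i] and [n/p_min] on [G] gives
     [prod_i a_i ^ (1/p_i) <= sum_i (1/p_i - 1/p_min) a_i + (n/p_min) G],
   and with the weights [(1/p_max - 1/p_i) / (n/p_max)] on the [a_i] and [1 / (n/p_max)] on
   [prod_i a_i ^ (1/p_i)] it gives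
     [(n/p_max) G <= sum_i (1/p_max - 1/p_i) a_i + prod_i a_i ^ (1/p_i)].
   Integrating both inequalities yields the two bounds. *)

Set Implicit Arguments. Unset Strict Implicit. Unset Printing Implicit Defensive.
Import Order.TTheory GRing.Theory Num.Theory.
Import numFieldNormedType.Exports.
Local Open Scope classical_set_scope.
Local Open Scope ring_scope.

Section geometric_means.
Variable R : realType.
Implicit Types (I : finType) (x y r s : R).

Lemma ln_le_subr1 x : 0 < x -> ln x <= x - 1.
Proof. by move=> x0; have := @le_ln1Dx R (x - 1); rewrite (addrC 1) subrK; apply; lra. Qed.

Lemma exists_weight_gt0 I (w : I -> R) :
  (forall i, 0 <= w i) -> \sum_i w i = 1 -> exists i, 0 < w i.
Proof.
move=> w0 w1; have [|i /andP[_ wi]] := @psumr_neq0P _ _ xpredT _ (fun i _ => w0 i).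
  by rewrite w1; exact/eqP/oner_neq0.
by exists i.
Qed.

Lemma weighted_amgm I (w a : I -> R) :
  (forall i, 0 <= w i) -> (forall i, 0 <= a i) -> \sum_i w i = 1 ->
  \prod_i a i `^ w i <= \sum_i w i * a i.
Proof.
move=> w0 a0 w1; set A := \sum_i w i * a i.
have A0 : 0 <= A by apply: sumr_ge0 => i _; exact: mulr_ge0.
have [/existsP[i /andP[wi /eqP ai]]|] := boolP [exists i, (w i != 0) && (a i == 0)].
  by rewrite (bigD1 i) //= ai powR0 // mul0r.
rewrite negb_exists => /forallP wa.
have {}wa i : w i = 0 \/ 0 < a i.
  by move: (wa i); rewrite negb_and negbK lt0r a0 andbT => /orP[/eqP|]; [left|right].
have [i wi] := exists_weight_gt0 w0 w1.
have Apos : 0 < A.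
  have ai : 0 < a i by case: (wa i) => // wi0; rewrite wi0 ltxx in wi.
  apply: lt_le_trans (_ : w i * a i <= A); first exact: mulr_gt0.
  by rewrite /A (bigD1 i) //= lerDl; apply: sumr_ge0 => j _; exact: mulr_ge0.
have -> : \prod_i a i `^ w i = expR (\sum_i w i * ln (a i)).
  rewrite expR_sum; apply: eq_bigr => j _.
  by case: (wa j) => [->|aj]; rewrite ?powRr0 ?mul0r ?expR0 // /powR gt_eqF.
rewrite -[leRHS](@lnK R A) ?posrE // ler_expR.
(* termwise, [ln (a j / A) <= a j / A - 1] *)
apply: (@le_trans _ _ (\sum_j (w j * (ln A - 1) + w j * a j / A))).
  apply: ler_sum => j _; case: (wa j) => [->|aj]; first by rewrite !mul0r add0r.
  rewrite -mulrA -mulrDr ler_wpM2l //.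
  by have := ln_le_subr1 (divr_gt0 aj Apos); rewrite ln_div ?posrE //; lra.
by rewrite big_split /= -!mulr_suml w1 mul1r -/A divff ?gt_eqF //; lra.
Qed.

Lemma weighted_amgm_extra I (w a : I -> R) v b :
  (forall i, 0 <= w i) -> (forall i, 0 <= a i) -> 0 <= v -> 0 <= b ->
  \sum_i w i + v = 1 ->
  \prod_i a i `^ w i * b `^ v <= \sum_i w i * a i + v * b.
Proof.
move=> w0 a0 v0 b0 wv1.
have sumE (F : I + unit -> R) : \sum_j F j = \sum_i F (inl i) + F (inr tt).
  by rewrite big_sumType (big_pred1 tt) // => -[].
have prodE (F : I + unit -> R) : \prod_j F j = \prod_i F (inl i) * F (inr tt).
  by rewrite big_sumType (big_pred1 tt) // => -[].
have := @weighted_amgm _ (fun j : I + unit => if j is inl i then w i else v)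
                         (fun j : I + unit => if j is inl i then a i else b).
by rewrite prodE !sumE; apply=> // -[].
Qed.

Lemma powRV x r : 0 <= x -> x^-1 `^ r = (x `^ r)^-1.
Proof. by move=> x0; rewrite -powR_inv1 // powRAC powR_inv1 // powR_ge0. Qed.

Lemma powR_div x y r : 0 <= x -> 0 <= y -> (x / y) `^ r = x `^ r / y `^ r.
Proof. by move=> x0 y0; rewrite powRM ?invr_ge0 // powRV. Qed.

Lemma ge0_powRD x r s : 0 <= r -> 0 <= s -> x `^ (r + s) = x `^ r * x `^ s.
Proof.
move=> r0 s0; have [rs0|rs0] := eqVneq (r + s) 0; last by apply: powRD; rewrite (negPf rs0).
have [-> ->] : r = 0 /\ s = 0 by lra.
by rewrite addr0 powRr0 mulr1.
Qed.

Lemma powR_prod I (a : I -> R) r : (forall i, 0 <= a i) ->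
  (\prod_i a i) `^ r = \prod_i a i `^ r.
Proof.
move=> a0; suff [] : 0 <= \prod_i a i /\ (\prod_i a i) `^ r = \prod_i a i `^ r by [].
apply: (big_ind2 (fun x y => 0 <= x /\ x `^ r = y)) => [|x1 x2 y1 y2 [x10 <-] [x20 <-]|//].
  by rewrite powR1.
by split; [exact: mulr_ge0 | rewrite powRM].
Qed.

Lemma prod_ge0_powRD I (a r s : I -> R) :
  (forall i, 0 <= r i) -> (forall i, 0 <= s i) ->
  \prod_i a i `^ r i * \prod_i a i `^ s i = \prod_i a i `^ (r i + s i).
Proof. by move=> r0 s0; rewrite -big_split; apply: eq_bigr => i _; rewrite ge0_powRD. Qed.

Definition geomean I (a : I -> R) := \prod_i a i `^ (#|I|%:R^-1).

Lemma geomean_ge0 I (a : I -> R) : 0 <= geomean a.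
Proof. by apply: prodr_ge0 => i _; exact: powR_ge0. Qed.

Lemma prod_powR_normalized I (u N q : I -> R) :
  (forall i, 0 <= u i) -> (forall i, 0 < N i) -> (forall i, 0 < q i) ->
  \prod_i ((u i / N i) `^ q i) `^ (q i)^-1 = \prod_i u i / \prod_i N i.
Proof.
move=> u0 N0 q0; rewrite -prodf_div; apply: eq_bigr => i _.
by rewrite -powRrM mulfV ?gt_eqF // powRr1 // divr_ge0 // ltW.
Qed.

Lemma geomean_normalized I (u N q : I -> R) :
  (forall i, 0 <= u i) -> (forall i, 0 <= N i) ->
  geomean (fun i => (u i / N i) `^ q i) =
  \prod_i u i `^ (q i / #|I|%:R) / \prod_i N i `^ (q i / #|I|%:R).
Proof.
by move=> u0 N0; rewrite /geomean -prodf_div; apply: eq_bigr => i _; rewrite -powRrM powR_div.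
Qed.

Lemma card_gt0_sum1 I (w : I -> R) : (forall i, 0 <= w i) -> \sum_i w i = 1 ->
  0 < #|I|%:R :> R.
Proof. by move=> w0 /(exists_weight_gt0 w0)[i _]; rewrite ltr0n; apply/card_gt0P; exists i. Qed.

Lemma prod_powR_le_lincomb_geomean I (w a : I -> R) m :
  0 <= m -> (forall i, m <= w i) -> (forall i, 0 <= a i) -> \sum_i w i = 1 ->
  \prod_i a i `^ w i <= \sum_i (w i - m) * a i + #|I|%:R * m * geomean a.
Proof.
move=> m0 mw a0 w1; set k := #|I|%:R.
have wm0 i : 0 <= w i - m by rewrite subr_ge0.
have k0 : 0 < k by apply: card_gt0_sum1 w1 => i; exact: le_trans (mw i).
have -> : \prod_i a i `^ w i = \prod_i a i `^ (w i - m) * geomean a `^ (k * m).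
  have km : k^-1 * (k * m) = m by rewrite mulrA mulVf ?gt_eqF // mul1r.
  rewrite /geomean -/k powR_prod => [|i]; last exact: powR_ge0.
  under [X in _ * X]eq_bigr do rewrite -powRrM km.
  by rewrite prod_ge0_powRD //; apply: eq_bigr => i _; rewrite subrK.
apply: weighted_amgm_extra => //; first exact: mulr_ge0 (ltW k0) m0.
  exact: geomean_ge0.
by rewrite sumrB w1 sumr_const -mulr_natl; lra.
Qed.

Lemma geomean_le_lincomb_prod_powR I (w a : I -> R) M :
  (forall i, 0 <= w i) -> (forall i, w i <= M) -> (forall i, 0 <= a i) ->
  \sum_i w i = 1 ->
  #|I|%:R * M * geomean a <= \sum_i (M - w i) * a i + \prod_i a i `^ w i.
Proof.
move=> w0 wM a0 w1; set k := #|I|%:R.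
have k0 : 0 < k := card_gt0_sum1 w0 w1.
have M0 : 0 < M by have [i wi] := exists_weight_gt0 w0 w1; exact: lt_le_trans wi (wM i).
have kM0 : 0 < k * M by rewrite mulr_gt0.
set c := (k * M)^-1; have c0 : 0 < c by rewrite invr_gt0.
have Mwc0 i : 0 <= (M - w i) * c by apply: mulr_ge0; [rewrite subr_ge0 | exact: ltW].
have P0 : 0 <= \prod_i a i `^ w i by apply: prodr_ge0 => j _; exact: powR_ge0.
have -> : geomean a = \prod_i a i `^ ((M - w i) * c) * (\prod_i a i `^ w i) `^ c.
  rewrite powR_prod => [|j]; last exact: powR_ge0.
  under [X in _ * X]eq_bigr do rewrite -powRrM.
  rewrite prod_ge0_powRD => [|//|j]; last exact: mulr_ge0 (w0 j) (ltW c0).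
  apply: eq_bigr => j _; congr (_ `^ _).
  by rewrite -mulrDl subrK /c invfM mulrCA mulfV ?mulr1 // gt_eqF.
rewrite -ler_pdivlMl // -/c.
apply: le_trans (weighted_amgm_extra Mwc0 a0 (ltW c0) P0 _) _.
  by rewrite -mulr_suml sumrB w1 sumr_const -mulr_natl -/k mulrBl mul1r subrK mulfV ?gt_eqF.
rewrite mulrDr mulr_sumr lerD2r.
by apply: ler_sum => j _; rewrite mulrAC mulrC.
Qed.

End geometric_means.

Lemma fine_muleEFin (R : realType) (x : \bar R) k : 0 <= k -> fine (x * k%:E)%E = fine x * k.
Proof.
move=> k0; case: x => [r||] //=; rewrite mul0r.
  by have [->|kpos] := eqVneq k 0; rewrite ?mule0 // gt0_mulye // lte_fin lt0r kpos.
by have [->|kpos] := eqVneq k 0; rewrite ?mule0 // gt0_mulNye // lte_fin lt0r kpos.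
Qed.

Section integral_lincomb.
Context d (T : measurableType d) (R : realType) (mu : {measure set T -> \bar R}).
Variables (I : finType) (a : I -> T -> R).
Hypotheses (ma : forall i, measurable_fun setT (a i)) (a0 : forall i x, 0 <= a i x).

Lemma measurable_prod_powR (w : I -> R) :
  measurable_fun setT (fun x => \prod_i a i x `^ w i).
Proof. by apply: measurable_prod => i _; exact: measurableT_comp (measurable_powR _) (ma i). Qed.

Let measurable_scale (r : R) (g : T -> R) :
  measurable_fun setT g -> measurable_fun setT (fun x => r * g x).
Proof. by move=> mg; apply: measurable_funM => //; exact: measurable_cst. Qed.

Lemma ge0_integral_lincomb (c : I -> R) k (g : T -> R) :
  (forall i, 0 <= c i) -> 0 <= k -> measurable_fun setT g -> (forall x, 0 <= g x) ->
  (\int[mu]_x (\sum_i c i * a i x + k * g x)%:E =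
   \sum_i (c i)%:E * \int[mu]_x (a i x)%:E + k%:E * \int[mu]_x (g x)%:E)%E.
Proof.
move=> c0 k0 mg g0; under eq_integral do rewrite EFinD.
rewrite ge0_integralD //; last 4 first.
- by move=> x _; rewrite lee_fin; apply: sumr_ge0 => i _; exact: mulr_ge0.
- by apply/measurable_EFinP; apply: measurable_sum => i; exact: measurable_scale.
- by move=> x _; rewrite lee_fin; exact: mulr_ge0.
- exact/measurable_EFinP/measurable_scale.
congr (_ + _)%E.
  under eq_integral do rewrite -sumEFin.
  rewrite ge0_integral_sum //; last 2 first.
  - by move=> i; apply/measurable_EFinP; exact: measurable_scale.
  - by move=> i x _; rewrite lee_fin; exact: mulr_ge0.
  apply: eq_bigr => i _; under eq_integral do rewrite EFinM.
  rewrite ge0_integralZl //; first exact/measurable_EFinP.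
  - by move=> x _; rewrite lee_fin a0.
  - by rewrite lee_fin c0.
under eq_integral do rewrite EFinM.
rewrite ge0_integralZl //; first exact/measurable_EFinP.
by move=> x _; rewrite lee_fin g0.
Qed.

Hypothesis a1 : forall i, (\int[mu]_x (a i x)%:E = 1)%E.

Lemma ge0_integral_le_lincomb (c : I -> R) k (g h : T -> R) :
  (forall i, 0 <= c i) -> 0 <= k -> measurable_fun setT g -> (forall x, 0 <= g x) ->
  measurable_fun setT h -> (forall x, 0 <= h x) ->
  (forall x, h x <= \sum_i c i * a i x + k * g x) ->
  (\int[mu]_x (h x)%:E <= (\sum_i c i)%:E + k%:E * \int[mu]_x (g x)%:E)%E.
Proof.
move=> c0 k0 mg g0 mh h0 hle.
apply: le_trans (_ : \int[mu]_x (\sum_i c i * a i x + k * g x)%:E <= _)%E.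
  apply: ge0_le_integral => //; [by move=> x _; rewrite lee_fin | exact/measurable_EFinP |
    | by move=> x _; rewrite lee_fin].
  apply/measurable_EFinP/measurable_funD; last exact: measurable_scale.
  by apply: measurable_sum => i; exact: measurable_scale.
rewrite ge0_integral_lincomb // -sumEFin.
by under eq_bigr do rewrite a1 mule1.
Qed.

Lemma integral_prod_powR_le1 (w : I -> R) :
  (forall i, 0 <= w i) -> \sum_i w i = 1 ->
  (\int[mu]_x (\prod_i a i x `^ w i)%:E <= 1)%E.
Proof.
move=> w0 w1; have := @ge0_integral_le_lincomb w 0 (fun=> 0)
  (fun x => \prod_i a i x `^ w i) w0 (lexx _).
rewrite w1 mul0e adde0; apply.
- exact: measurable_cst.
- by move=> _; exact: lexx.
- exact: measurable_prod_powR.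
- by move=> x; apply: prodr_ge0 => i _; exact: powR_ge0.
- by move=> x; rewrite mul0r addr0; apply: weighted_amgm.
Qed.

Lemma integral_prod_powR_fin_num (w : I -> R) :
  (forall i, 0 <= w i) -> \sum_i w i = 1 ->
  (\int[mu]_x (\prod_i a i x `^ w i)%:E)%E \is a fin_num.
Proof.
move=> w0 w1; rewrite ge0_fin_numE; last first.
  by apply: integral_ge0 => x _; rewrite lee_fin; apply: prodr_ge0 => i _; exact: powR_ge0.
exact: le_lt_trans (integral_prod_powR_le1 w0 w1) (ltry _).
Qed.

Theorem integral_prod_powR_bounds (w : I -> R) (m M : R) :
  0 <= m -> (forall i, m <= w i <= M) -> \sum_i w i = 1 ->
  let Q := fine (\int[mu]_x (\prod_i a i x `^ w i)%:E)%E in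
  let G := fine (\int[mu]_x (geomean (a ^~ x))%:E)%E in
  1 - #|I|%:R * M * (1 - G) <= Q /\ Q <= 1 - #|I|%:R * m * (1 - G).
Proof.
move=> m0 wmM w1 Q G; set k := #|I|%:R.
have mw i : m <= w i by case/andP: (wmM i).
have wM i : w i <= M by case/andP: (wmM i).
have w0 i : 0 <= w i := le_trans m0 (mw i).
have k0 : 0 < k := card_gt0_sum1 w0 w1.
have M0 : 0 <= M by have [i wi] := exists_weight_gt0 w0 w1; exact: ltW (lt_le_trans wi (wM i)).
have mP := measurable_prod_powR w.
have mG : measurable_fun setT (fun x => geomean (a ^~ x)) := measurable_prod_powR _.
have P0 x : 0 <= \prod_i a i x `^ w i by apply: prodr_ge0 => i _; exact: powR_ge0.
have G0 x : 0 <= geomean (a ^~ x) := geomean_ge0 _.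
have Pfin := integral_prod_powR_fin_num w0 w1.
have Gfin : (\int[mu]_x (geomean (a ^~ x))%:E)%E \is a fin_num.
  apply: (@integral_prod_powR_fin_num (fun=> k^-1)) => [i|]; first by rewrite invr_ge0 ltW.
  by rewrite sumr_const -mulr_natl mulfV ?gt_eqF.
have sumk (c : R) : \sum_(i : I) c = k * c by rewrite sumr_const -mulr_natl.
have wm0 i : 0 <= w i - m by rewrite subr_ge0.
have Mw0 i : 0 <= M - w i by rewrite subr_ge0.
have := ge0_integral_le_lincomb wm0 (mulr_ge0 (ltW k0) m0) mG G0 mP P0
  (fun x => prod_powR_le_lincomb_geomean m0 mw (a0^~ x) w1).
rewrite -(fineK Pfin) -(fineK Gfin) -EFinM -EFinD lee_fin sumrB w1 sumk -/Q -/G => up.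
have IkMG : (\int[mu]_x (k * M * geomean (a ^~ x))%:E = (k * M)%:E * G%:E)%E.
  under eq_integral do rewrite EFinM.
  rewrite ge0_integralZl //; first by rewrite /G fineK.
  - exact/measurable_EFinP.
  - by move=> x _; rewrite lee_fin.
  - by rewrite lee_fin mulr_ge0 // ltW.
have : (\int[mu]_x (k * M * geomean (a ^~ x))%:E <=
    (\sum_i (M - w i))%:E + 1%:E * \int[mu]_x (\prod_i a i x `^ w i)%:E)%E.
  apply: ge0_integral_le_lincomb Mw0 ler01 mP P0 _ _ _ => [|x|x].
  - exact: measurable_scale.
  - exact: mulr_ge0 (mulr_ge0 (ltW k0) M0) (G0 x).
  - by rewrite mul1r; exact: geomean_le_lincomb_prod_powR.
rewrite IkMG -(fineK Pfin) -EFinM mul1e -EFinD lee_fin sumrB w1 sumk -/Q => lo.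
split; lra.
Qed.
End integral_lincomb.

Section Lnorm_normalization.
Context d (T : measurableType d) (R : realType) (mu : {measure set T -> \bar R}).
Implicit Types (h : T -> R).

Lemma Lnorm1_ge0 h : (forall x, 0 <= h x) ->
  ('N[mu]_1[EFin \o h] = \int[mu]_x (h x)%:E)%E.
Proof.
by move=> h0; rewrite Lnorm1; apply: eq_integral => x _; rewrite -[(EFin \o h) x]/((h x)%:E) abse_EFin ger0_norm.
Qed.

Lemma fine_ge0_integralZr h k : measurable_fun setT h -> (forall x, 0 <= h x) -> 0 <= k ->
  fine (\int[mu]_x (h x * k)%:E)%E = fine (\int[mu]_x (h x)%:E)%E * k.
Proof.
move=> mh h0 k0; under eq_integral do rewrite EFinM.
rewrite ge0_integralZr ?fine_muleEFin //; first exact/measurable_EFinP.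
by move=> x _; rewrite lee_fin.
Qed.

Lemma integral_powR_div_Lnorm (q : R) h : 0 < q ->
  measurable_fun setT h -> (forall x, 0 <= h x) ->
  ('N[mu]_q%:E[EFin \o h] < +oo)%E -> (0 < 'N[mu]_q%:E[EFin \o h])%E ->
  (\int[mu]_x ((h x / fine 'N[mu]_q%:E[EFin \o h]) `^ q)%:E = 1)%E.
Proof.
move=> q0 mh h0 Nfin Npos; set N := fine _.
have N0 : 0 < N by apply: fine_gt0; rewrite Npos Nfin.
have IhN : (\int[mu]_x (h x `^ q)%:E = (N `^ q)%:E)%E.
  rewrite -poweR_EFin fineK ?ge0_fin_numE ?Lnorm_ge0 // powR_Lnorm ?gt_eqF //.
  apply: eq_integral => x _.
  by rewrite -[(EFin \o h) x]/((h x)%:E) abse_EFin poweR_EFin ger0_norm.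
under eq_integral => x _ do rewrite (powR_div q (h0 x) (ltW N0)) EFinM.
rewrite ge0_integralZr // ?IhN -?EFinM ?mulfV // ?gt_eqF ?powR_gt0 //.
- exact/measurable_EFinP/(measurableT_comp (measurable_powR _) mh).
- by move=> x _; rewrite lee_fin powR_ge0.
- by rewrite lee_fin invr_ge0 powR_ge0.
Qed.

End Lnorm_normalization.

Theorem theorem3p3 (d : measure_display) (T : measurableType d) (R : realType)
  (mu : {measure set T -> \bar R}) (n : nat) (p : 'I_n -> R) (f : 'I_n -> T -> R) :
  (0 < mu [set: T])%E ->
  (forall i, 1 < p i) ->
  \sum_(i < n) (p i)^-1 = 1 ->
  (forall i, measurable_fun [set: T] (f i)) ->
  (forall i x, 0 <= f i x) ->
  (forall i, ('N[mu]_((p i)%:E)[EFin \o f i] < +oo)%E) ->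
  (forall i, (0 < 'N[mu]_((p i)%:E)[EFin \o f i])%E) ->
  let N i := fine ('N[mu]_((p i)%:E)[EFin \o f i]) in
  let Rq := fine (\int[mu]_x (\prod_(i < n) f i x `^ (p i / n%:R))%:E)
            / \prod_(i < n) N i `^ (p i / n%:R) in
  let prodN := \prod_(i < n) N i in
  let N1 := fine ('N[mu]_1[EFin \o (fun x => \prod_(i < n) f i x)]) in
  prodN * (1 - n%:R * pinv_max p * (1 - Rq)) <= N1 /\
  N1 <= prodN * (1 - n%:R * pinv_min p * (1 - Rq)).
Proof.
(* The positivity of [mu] is implied by that of the norms. *)
move=> _ p1 sp mf f0 Nfin Npos N Rq prodN N1.
have p0 i : 0 < p i := lt_trans ltr01 (p1 i).
have N0 i : 0 < N i by apply: fine_gt0; rewrite Npos Nfin.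
have prodN0 : 0 < prodN by apply: prodr_gt0.
pose a i x := (f i x / N i) `^ p i.
have ma i : measurable_fun setT (a i).
  exact/(measurableT_comp (measurable_powR _))/measurable_funM/measurable_cst.
have a1 i := integral_powR_div_Lnorm (p0 i) (mf i) (f0 i) (Nfin i) (Npos i).
have m0 : 0 <= pinv_min p by apply: le_bigmin => // i _; rewrite invr_ge0 ltW.
have wmM i : pinv_min p <= (p i)^-1 <= pinv_max p by rewrite bigmin_le le_bigmax.
have [] := integral_prod_powR_bounds ma (fun i x => powR_ge0 _ _) a1 m0 wmM sp.
have mprodf : measurable_fun setT (fun x => \prod_i f i x) by apply: measurable_prod => i _.
have prodf0 x : 0 <= \prod_i f i x by apply: prodr_ge0 => i _.
have -> : fine (\int[mu]_x (\prod_i a i x `^ (p i)^-1)%:E)%E = N1 / prodN.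
  under eq_integral => x _ do rewrite (prod_powR_normalized (f0^~ x) N0 p0).
  by rewrite fine_ge0_integralZr ?invr_ge0 ?ltW // /N1 (Lnorm1_ge0 mu prodf0).
have -> : fine (\int[mu]_x (geomean (a ^~ x))%:E)%E = Rq.
  under eq_integral => x _ do rewrite (geomean_normalized p (f0^~ x) (fun i => ltW (N0 i))) card_ord.
  rewrite fine_ge0_integralZr ?invr_ge0 ?ltW //.
  - exact: (measurable_prod_powR mf).
  - by move=> x; apply: prodr_ge0 => i _; exact: powR_ge0.
  - by apply: prodr_gt0 => i _; exact: powR_gt0.
rewrite card_ord => lo up.
by split; rewrite (mulrC prodN); [rewrite -ler_pdivlMr | rewrite -ler_pdivrMr].
Qed.
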